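(* The $3$-form $\varphi=e^{127}+e^{347}+e^{567}+e^{135}-e^{146}-e^{236}-e^{245}$ on the Lie algebra $\mathfrak{g}$ described in the context is coclosed ($d\ast\varphi=0$) if and only if $\operatorname{tr}(A)=0$ and $\theta(A)\omega_7+\theta(B)\omega_1+\theta(C)\omega_2=\operatorname{tr}(A_1)\,\omega_7$.
   Context: $\mathfrak{g}$ is a $7$-dimensional Lie algebra with basis $\{e_1,\dots,e_7\}$, dual basis $\{e^i\}$, $e^{ij\dots}=e^i\wedge e^j\wedge\cdots$, bracket given by $A_1=\operatorname{ad}e_7|_{\operatorname{span}\{e_1,e_2\}}=\begin{pmatrix}x&z\\ y&w\end{pmatrix}$, $A=\operatorname{ad}e_7|_{\mathfrak{g}_1}$, $B=\operatorname{ad}e_1|_{\mathfrak{g}_1}$, $C=\operatorname{ad}e_2|_{\mathfrak{g}_1}$, with $\mathfrak{g}_1=\operatorname{span}\{e_3,\dots,e_6\}$ an abelian ideal, $\operatorname{span}\{e_1,e_2\}$ abelian, $\operatorname{span}\{e_7,e_1,e_2\}$ a subalgebra, $\operatorname{tr}B=\operatorname{tr}C=0$, $[A,B]=xB+yC$, $[A,C]=zB+wC$, $[B,C]=0$. $\ast$ is the Hodge star of the metric and orientation induced by $\varphi$ (making $\{e_i\}$ oriented orthonormal). $\omega_7=e^{34}+e^{56}$, $\omega_1=e^{35}-e^{46}$, $\omega_2=-e^{36}-e^{45}$; for $M\in\mathfrak{gl}(\mathfrak{g}_1)$, $\theta(M)\alpha(v_1,\dots,v_k)=-\alpha(Mv_1,\dots,v_k)-\dots-\alpha(v_1,\dots,Mv_k)$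 on $\Lambda^k\mathfrak{g}_1^*$. *)

(* Forms on the 7-dim Lie algebra g are represented by
   their values on tuples of basis vectors: a k-form alpha is a function
   seq 'I_7 -> R, alpha [:: i1; ...; ik] = alpha(e_{i1+1}, ..., e_{ik+1})
   (0-based ordinal i stands for the paper's e_{i+1}). *)
From HB Require Import structures.
From mathcomp Require Import all_boot all_order all_algebra.
From mathcomp Require Import reals.
Set Implicit Arguments. Unset Strict Implicit. Unset Printing Implicit Defensive.
Import Order.TTheory GRing.Theory Num.Theory.
Local Open Scope ring_scope.

Section G2Defs.
Variable R : realType.

(* e^{I} = e^{i1} /\ ... /\ e^{ik}, evaluated on (e_{s1},...,e_{sk}):
   det [ e^{ia}(e_{sb}) ]_{a,b}; zero on tuples of the wrong length. *)
Definition basis_form (I s : seq 'I_7) : R :=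
  if size s == size I then
    \det (\matrix_(a < size I, b < size I)
            ((nth ord0 I a == nth ord0 s b)%:R : R))
  else 0.

(* e^{l1 l2 ...} with the paper's 1-based indices *)
Definition E (l : seq nat) : seq 'I_7 -> R :=
  basis_form [seq @inord 6 n.-1 | n <- l].

Definition phi (s : seq 'I_7) : R :=
  E [:: 1; 2; 7]%N s + E [:: 3; 4; 7]%N s + E [:: 5; 6; 7]%N s
  + E [:: 1; 3; 5]%N s - E [:: 1; 4; 6]%N s - E [:: 2; 3; 6]%N s
  - E [:: 2; 4; 5]%N s.

(* Riemannian volume form e^{1234567} of the metric making {e_i}
   oriented orthonormal *)
Definition vol (s : seq 'I_7) : R := basis_form (enum 'I_7) s.

Definition hodge (k : nat) (alpha : seq 'I_7 -> R) (J : seq 'I_7) : R :=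
  (k`!%:R)^-1 * \sum_(I : k.-tuple 'I_7) vol (I ++ J) * alpha I.

(* Chevalley--Eilenberg differential for structure constants c,
   [e_i, e_j] = sum_l c i j l e_l:
   d alpha(x_0..x_k) = sum_{a<b} (-1)^(a+b) alpha([x_a,x_b], x_0,..^a..^b..,x_k) *)
Definition drop2 (s : seq 'I_7) (a b : nat) : seq 'I_7 :=
  [seq nth ord0 s k | k <- iota 0 (size s) & (k != a) && (k != b)].

Definition dform (c : 'I_7 -> 'I_7 -> 'I_7 -> R) (alpha : seq 'I_7 -> R)
    (s : seq 'I_7) : R :=
  \sum_(a < size s) \sum_(b < size s | (a < b)%N)
     (-1) ^+ (a + b) *
     \sum_(l : 'I_7) c (nth ord0 s a) (nth ord0 s b) l * alpha (l :: drop2 s a b).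

Definition mat2 (x y z w : R) : 'M[R]_2 :=
  \matrix_(i < 2, j < 2)
    (if i == 0 :> nat then (if j == 0 :> nat then x else z)
     else (if j == 0 :> nat then y else w)).

(* index of g_1 = span{e3,...,e6}: ordinal j of 'I_7 (j in 2..5) -> j-2 in 'I_4 *)
Definition g1i (j : 'I_7) : 'I_4 := @inord 3 (j - 2).
Definition ing1 (j : 'I_7) : bool := (2 <= j <= 5)%N.

(* "one-sided" brackets: coefficient of e_l in [e_i, e_j] for
   i = e7 acting on span{e1,...,e6} (via A_1 and A) and
   i = e1, e2 acting on g_1 (via B, C). *)
Definition br (x y z w : R) (A B C : 'M[R]_4) (i j l : 'I_7) : R :=
  if ing1 j && ing1 l then
    (if i == 6 :> nat then A (g1i l) (g1i j)
     else if i == 0 :> nat then B (g1i l) (g1i j)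
     else if i == 1 :> nat then C (g1i l) (g1i j) else 0)
  else if [&& (j <= 1)%N, (l <= 1)%N & (i == 6 :> nat)] then
    mat2 x y z w (@inord 1 l) (@inord 1 j)
  else 0.

Definition bracket (x y z w : R) (A B C : 'M[R]_4) (i j l : 'I_7) : R :=
  br x y z w A B C i j l - br x y z w A B C j i l.

(* 2-forms on g_1, by their values on pairs of basis vectors of g_1;
   ordinal a : 'I_4 stands for e_{a+3}. *)
Definition f2 (p q : nat) (a b : 'I_4) : R :=
  ((a + 3 == p)%N && (b + 3 == q)%N)%:R - ((a + 3 == q)%N && (b + 3 == p)%N)%:R.

Definition om7 (a b : 'I_4) : R := f2 3 4 a b + f2 5 6 a b.
Definition om1 (a b : 'I_4) : R := f2 3 5 a b - f2 4 6 a b.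
Definition om2 (a b : 'I_4) : R := - f2 3 6 a b - f2 4 5 a b.

Definition theta (M : 'M[R]_4) (alpha : 'I_4 -> 'I_4 -> R) (a b : 'I_4) : R :=
  - (\sum_(k < 4) M k a * alpha k b) - (\sum_(k < 4) M k b * alpha a k).

End G2Defs.

(* Everything is linear in the 52 parameters x, y, z, w and the entries of A, B, C.  The Hodge dual of phi is the 4-form
     psi = e^1234 + e^1256 + e^1367 + e^1457 + e^2357 - e^2467 + e^3456,
   so each value d psi (e_s) is an integral linear form in the parameters, as are
   tr A, tr B, tr C and the entries of
     theta(A) w7 + theta(B) w1 + theta(C) w2 - tr(A1) w7.
   Evaluating these forms shows that every d psi (e_s) is zero or, up to sign, one
   of tr B, tr C, tr A or an entry; conversely tr A and every entry is zero or, up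
   to sign, tr B, tr C or some d psi (e_s).  Since tr B = tr C = 0, the two systems
   of linear equations are equivalent. *)

From mathcomp Require Import all_boot all_order all_algebra.
From mathcomp Require Import reals.
From mathcomp Require Import zify ring.
Import Order.TTheory GRing.Theory Num.Theory.
Local Open Scope ring_scope.

(* Names ending in z denote integer-valued versions, computable by vm_compute
   (big operators are not), of real-valued objects; they act on the index lists
   [map val s] instead of on lists s of ordinals. *)

Definition sumz (r : seq int) : int := foldr +%R 0 r.

Lemma sumz_map (T : Type) (f : T -> int) (r : seq T) :
  sumz (map f r) = \sum_(i <- r) f i.
Proof. by elim: r => [|a r IH]; rewrite ?big_nil ?big_cons //= IH. Qed.

Definition rem_nth {T : Type} (b : nat) (s : seq T) : seq T :=
  take b s ++ drop b.+1 s.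

Lemma size_rem_nth {T : Type} (s : seq T) b :
  (b < size s)%N -> size (rem_nth b s) = (size s).-1.
Proof. by move=> hb; rewrite size_cat size_take hb size_drop; lia. Qed.

Lemma nth_rem_nth {T : Type} (x0 : T) (s : seq T) b k :
  (b < size s)%N -> nth x0 (rem_nth b s) k = nth x0 s (bump b k).
Proof.
move=> hb; rewrite nth_cat size_take hb /bump.
case: ltnP => hk; first by rewrite nth_take // add0n.
by rewrite nth_drop; congr nth; lia.
Qed.

(* det [I_a == s_b], by Laplace expansion along the first row. *)
Fixpoint kdelta (I s : seq nat) : int :=
  match I with
  | [::] => nilp s
  | i :: I' =>
      if size s == (size I').+1 then
        sumz [seq if i == nth 0 s b then (-1) ^+ b * kdelta I' (rem_nth b s) else 0
             | b <- iota 0 (size s)]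
      else 0
  end.

Lemma kdelta_size I s : size s != size I -> kdelta I s = 0.
Proof. by case: I => [|i I] /=; [case: s | move/negPf => ->]. Qed.

Lemma basis_form_kdelta (R : realType) (I s : seq 'I_7) :
  basis_form R I s = (kdelta (map val I) (map val s))%:~R.
Proof.
elim: I s => [|i I IH] s.
  by rewrite /basis_form; case: s => [|t s] //=; rewrite det_mx00.
rewrite /basis_form /= !size_map.
case: eqP => [hs|]; last by rewrite mulr0z.
rewrite (expand_det_row _ ord0) sumz_map rmorph_sum /= hs.
rewrite -[iota 0 _]/(index_iota 0 _.+1) big_mkord.
apply: eq_bigr => b _; have hb : (b < size s)%N by rewrite hs.
have minor : \det (row' ord0 (col' b
      (\matrix_(a, c) ((nth ord0 (i :: I) a == nth ord0 s c)%:R : R))))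
    = basis_form R I (rem_nth b s).
  rewrite /basis_form size_rem_nth // hs eqxx; congr (\det _).
  by apply/matrixP => a c; rewrite !mxE nth_rem_nth.
rewrite !mxE /cofactor minor IH map_cat map_take map_drop -/(rem_nth _ _).
rewrite (nth_map ord0) // add0n /=.
case: (i =P nth ord0 s b) => [<-|ne]; first by rewrite eqxx mul1r intrM intr_sign.
by rewrite ifF ?mul0r //; apply/negP => /eqP/val_inj.
Qed.

Lemma big_iota_ord {V : nmodType} n (F : nat -> V) :
  \sum_(i <- iota 0 n) F i = \sum_(i < n) F i.
Proof. by rewrite -{1}(subn0 n) big_mkord. Qed.

Fixpoint tuples (m n : nat) : seq (seq nat) :=
  if n is n'.+1 then [seq i :: t | i <- iota 0 m, t <- tuples m n'] else [:: [::]].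

Lemma mem_tuples m n sv :
  (sv \in tuples m n) = (size sv == n) && all (fun i => i < m)%N sv.
Proof.
elim: n sv => [|n IH] [|i sv] //=; first by apply/allpairsP => -[[j t] []].
apply/allpairsP/andP => [[[j t] /= [hj ht [-> ->]]] | [hs /andP[hi ha]]].
  by move: hj ht; rewrite mem_iota add0n IH => /andP[_ ->] /andP[hs ->].
by exists (i, sv); rewrite /= mem_iota leq0n add0n IH hi ha; split; rewrite ?andbT.
Qed.

Lemma big_tuple_cons {V : nmodType} {T : finType} n (F : seq T -> V) :
  \sum_(t : n.+1.-tuple T) F t = \sum_(x : T) \sum_(t : n.-tuple T) F (x :: t).
Proof.
rewrite pair_big /=.
rewrite (reindex (fun p : T * n.-tuple T => [tuple of p.1 :: p.2])) //=.
exists (fun t : n.+1.-tuple T => (thead t, [tuple of behead t])) => [[x t] _|t _].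
  by congr pair; apply: val_inj.
by rewrite [in RHS](tuple_eta t).
Qed.

Lemma big_tuples {V : nmodType} m n (g : seq nat -> V) :
  \sum_(t : n.-tuple 'I_m) g (map val t) = \sum_(sv <- tuples m n) g sv.
Proof.
elim: n g => [|n IH] g.
  by rewrite (big_pred1 [tuple]) ?big_seq1 // => t; apply/esym/eqP/tuple0.
rewrite (big_tuple_cons _ (fun s => g (map val s))) big_allpairs_dep /= big_iota_ord.
by apply: eq_bigr => i _; rewrite -IH.
Qed.

Lemma tuple_of_mem_tuples m n sv :
  sv \in tuples m.+1 n -> exists t : n.-tuple 'I_m.+1, map val t = sv.
Proof.
rewrite mem_tuples => /andP[/eqP hs ha].
have hsz : size (map (@inord m) sv) == n by rewrite size_map hs.
exists (Tuple hsz); rewrite /= -map_comp -[RHS]map_id.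
by apply/eq_in_map => i /(allP ha) him /=; rewrite inordK.
Qed.

Definition linform := seq (nat * int).

Definition scalel (c : int) (L : linform) : linform := [seq (p.1, c * p.2) | p <- L].

Definition coefs (n : nat) (L : linform) : seq int :=
  foldr (fun p v => set_nth 0 v p.1 (nth 0 v p.1 + p.2)) (nseq n 0) L.

Definition up_to_sign (n : nat) (Z : seq linform) : seq (seq int) :=
  coefs n [::] :: flatten [seq [:: coefs n e; coefs n (scalel (-1) e)] | e <- Z].

Definition each_up_to_sign (n : nat) (Ls Z : seq linform) : bool :=
  let U := up_to_sign n Z in all (fun L => coefs n L \in U) Ls.

Section LinearForms.
Context {R : pzRingType} (P : nat -> R).

Definition lineval (L : linform) : R := \sum_(p <- L) p.2%:~R * P p.1.

Lemma lineval_cat L1 L2 : lineval (L1 ++ L2) = lineval L1 + lineval L2.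
Proof. exact: big_cat. Qed.

Lemma lineval_nil : lineval [::] = 0.
Proof. exact: big_nil. Qed.

Lemma lineval1 k c : lineval [:: (k, c)] = c%:~R * P k.
Proof. exact: big_seq1. Qed.

Lemma lineval_flatten (T : Type) (r : seq T) (f : T -> linform) :
  lineval (flatten (map f r)) = \sum_(i <- r) lineval (f i).
Proof.
elim: r => [|a r IH]; first by rewrite big_nil lineval_nil.
by rewrite /= lineval_cat IH big_cons.
Qed.

Lemma lineval_scalel c L : lineval (scalel c L) = c%:~R * lineval L.
Proof.
rewrite /lineval big_map mulr_sumr; apply: eq_bigr => p _.
by rewrite intrM mulrA.
Qed.

Lemma lineval_coefs n L N : (size (coefs n L) <= N)%N ->
  lineval L = \sum_(k < N) (nth 0 (coefs n L) k)%:~R * P k.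
Proof.
elim: L => [|[i c] L IH] hN.
  by rewrite lineval_nil big1 // => k _; rewrite nth_nseq if_same mul0r.
have nth_cons k :
    nth 0 (coefs n ((i, c) :: L)) k = nth 0 (coefs n L) k + (k == i)%:R * c.
  by rewrite /= nth_set_nth /=; case: eqP => [->|_]; rewrite ?mul1r ?mul0r ?addr0.
move: hN; rewrite /= size_set_nth geq_max => /andP[hiN hLN].
rewrite /lineval big_cons -/(lineval L) (IH hLN) addrC.
under [RHS]eq_bigr => k _ do rewrite nth_cons intrD mulrDl.
rewrite big_split /=; congr (_ + _).
rewrite (bigD1 (Ordinal hiN)) //= eqxx mul1r big1 ?addr0 // => k /negPf hk.
by rewrite -val_eqE /= in hk; rewrite hk mul0r mul0r.
Qed.

Lemma lineval_eq_coefs n L1 L2 : coefs n L1 = coefs n L2 -> lineval L1 = lineval L2.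
Proof. by move=> h; rewrite (@lineval_coefs n L1 _ (leqnn _)) h -lineval_coefs. Qed.

Lemma lineval_each_up_to_sign {n Ls Z} : each_up_to_sign n Ls Z ->
  {in Z, forall e, lineval e = 0} -> {in Ls, forall L, lineval L = 0}.
Proof.
move=> /allP hLs Z0 L /hLs; rewrite inE => /orP[/eqP/lineval_eq_coefs -> | ].
  exact: lineval_nil.
case/flattenP => _ /mapP[e he ->]; rewrite !inE => /orP[] /eqP/lineval_eq_coefs ->.
  exact: Z0.
by rewrite lineval_scalel Z0 ?mulr0.
Qed.

End LinearForms.

Definition Ez (l sv : seq nat) : int := kdelta [seq n.-1 | n <- l] sv.

Lemma E_kdelta (R : realType) l (s : seq 'I_7) :
  all (fun n => 0 < n <= 7)%N l -> E R l s = (Ez l (map val s))%:~R.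
Proof.
move=> hl; rewrite /E basis_form_kdelta /Ez -map_comp.
by congr (kdelta _ _)%:~R; apply/eq_in_map => n /(allP hl) hn /=; rewrite inordK //; lia.
Qed.

Lemma vol_kdelta (R : realType) (s : seq 'I_7) :
  vol R s = (kdelta (iota 0 7) (map val s))%:~R.
Proof. by rewrite /vol basis_form_kdelta val_enum_ord. Qed.

Definition phi_comb {V : zmodType} (e : seq nat -> V) : V :=
  e [:: 1; 2; 7]%N + e [:: 3; 4; 7]%N + e [:: 5; 6; 7]%N + e [:: 1; 3; 5]%N
  - e [:: 1; 4; 6]%N - e [:: 2; 3; 6]%N - e [:: 2; 4; 5]%N.

Definition psi_comb {V : zmodType} (e : seq nat -> V) : V :=
  e [:: 1; 2; 3; 4]%N + e [:: 1; 2; 5; 6]%N + e [:: 1; 3; 6; 7]%N + e [:: 1; 4; 5; 7]%N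
  + e [:: 2; 3; 5; 7]%N - e [:: 2; 4; 6; 7]%N + e [:: 3; 4; 5; 6]%N.

Lemma phi_comb_intr (R : pzRingType) (g : seq nat -> int) :
  (phi_comb g)%:~R = phi_comb (fun l => (g l)%:~R) :> R.
Proof. by rewrite /phi_comb !(intrD, intrN). Qed.

Lemma psi_comb_intr (R : pzRingType) (g : seq nat -> int) :
  (psi_comb g)%:~R = psi_comb (fun l => (g l)%:~R) :> R.
Proof. by rewrite /psi_comb !(intrD, intrN). Qed.

Definition psi (R : realType) (s : seq 'I_7) : R := psi_comb (fun l => E R l s).

Definition phiz (sv : seq nat) : int := phi_comb (fun l => Ez l sv).
Definition psiz (sv : seq nat) : int := psi_comb (fun l => Ez l sv).

Lemma phi_int (R : realType) (s : seq 'I_7) : phi R s = (phiz (map val s))%:~R.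
Proof. by rewrite /phiz phi_comb_intr /phi /phi_comb /= !E_kdelta. Qed.

Lemma psi_int (R : realType) (s : seq 'I_7) : psi R s = (psiz (map val s))%:~R.
Proof. by rewrite /psiz psi_comb_intr /psi /psi_comb /= !E_kdelta. Qed.

Lemma hodge_phiz :
  let supp := [seq Iv <- tuples 7 3 | phiz Iv != 0] in
  all (fun Jv => sumz [seq kdelta (iota 0 7) (Iv ++ Jv) * phiz Iv | Iv <- supp]
                 == 6 * psiz Jv)
      (tuples 7 4).
Proof. vm_cast_no_check (erefl true). Qed.

Lemma hodge_phi (R : realType) (J : seq 'I_7) : hodge 3 (phi R) J = psi R J.
Proof.
rewrite psi_int /hodge.
have [hJ|hJ] := eqVneq (size J) 4; last first.
  rewrite /psiz /psi_comb /Ez !kdelta_size ?size_map // big1 ?mulr0 // => I _.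
  by rewrite /vol /basis_form size_cat size_tuple size_enum_ord ifF ?mul0r //; lia.
have hJt : map val J \in tuples 7 4.
  by rewrite mem_tuples size_map hJ /=; apply/allP => _ /mapP[j _ ->].
have /eqP := allP hodge_phiz _ hJt.
rewrite sumz_map big_filter => hsum.
under eq_bigr => I _ do rewrite vol_kdelta phi_int map_cat -intrM.
rewrite (big_tuples 7 3 (fun Iv => (kdelta (iota 0 7) (Iv ++ map val J) * phiz Iv)%:~R)).
rewrite -rmorph_sum -(big_rmcond (fun Iv => phiz Iv != 0)) /=; last first.
  by move=> Iv /negPn/eqP ->; rewrite mulr0.
by rewrite hsum intrM -[6%:~R]/(3`!%:R : R) mulKf // pnatr_eq0.
Qed.

(* The structure constants are linear forms in 52 parameters: x, y, z, w are
   parameters 0..3, and entry (i, j) of the b-th matrix of [A; B; C] is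
   parameter [slot b i j]. *)
Definition slot (b i j : nat) : nat := (4 + 16 * b + 4 * i + j)%N.

Definition brz (i j l : nat) : linform :=
  if (2 <= j <= 5)%N && (2 <= l <= 5)%N then
    if i == 6%N then [:: (slot 0 (l - 2) (j - 2), 1)]
    else if i == 0%N then [:: (slot 1 (l - 2) (j - 2), 1)]
    else if i == 1%N then [:: (slot 2 (l - 2) (j - 2), 1)]
    else [::]
  else if [&& j <= 1, l <= 1 & i == 6]%N then [:: ((l + 2 * j)%N, 1)]
  else [::].

Definition bracketz (i j l : nat) : linform := brz i j l ++ scalel (-1) (brz j i l).

Definition drop2z (sv : seq nat) (a b : nat) : seq nat :=
  [seq nth 0 sv k | k <- iota 0 (size sv) & (k != a) && (k != b)].

Definition dpsiz (sv : seq nat) : linform :=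
  flatten [seq flatten [seq
    if (a < b)%N then
      (* testing [L] first only spares vm_compute the evaluation of [psiz] *)
      flatten [seq let L := bracketz (nth 0 sv a) (nth 0 sv b) l in
                   if L is [::] then [::]
                   else scalel ((-1) ^+ (a + b) * psiz (l :: drop2z sv a b)) L
              | l <- iota 0 7]
    else [::] | b <- iota 0 (size sv)] | a <- iota 0 (size sv)].

Lemma map_val_drop2 (s : seq 'I_7) a b : map val (drop2 s a b) = drop2z (map val s) a b.
Proof.
rewrite /drop2 /drop2z size_map -map_comp; apply/eq_in_map => k.
by rewrite mem_filter mem_iota add0n => /andP[_ hk] /=; rewrite (nth_map ord0).
Qed.

Section StructureConstants.
Context {R : realType} (x y z w : R) (A B C : 'M[R]_4).

Definition param (k : nat) : R :=
  if (k < 4)%N then nth 0 [:: x; y; z; w] k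
  else nth 0 [:: A; B; C] ((k - 4) %/ 16)
         (inord ((k - 4) %% 16 %/ 4)) (inord ((k - 4) %% 4)).

Lemma param_slot b (i j : 'I_4) : param (slot b i j) = nth 0 [:: A; B; C] b i j.
Proof.
have [hi hj] := (ltn_ord i, ltn_ord j); rewrite /param /slot.
have -> : (4 + 16 * b + 4 * i + j < 4)%N = false by lia.
have -> : ((4 + 16 * b + 4 * i + j - 4) %/ 16 = b)%N by lia.
have -> : ((4 + 16 * b + 4 * i + j - 4) %% 16 %/ 4 = i)%N by lia.
have -> : ((4 + 16 * b + 4 * i + j - 4) %% 4 = j)%N by lia.
by rewrite !inord_val.
Qed.

Lemma br_lin (i j l : 'I_7) : br x y z w A B C i j l = lineval param (brz i j l).
Proof.
rewrite /br /brz /ing1; case: ifP => [/andP[hj hl]|_].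
  have gj : g1i j = (j - 2)%N :> nat by rewrite /g1i inordK //; lia.
  have gl : g1i l = (l - 2)%N :> nat by rewrite /g1i inordK //; lia.
  rewrite -gj -gl.
  do ![case: eqP => _; first by rewrite lineval1 mul1r param_slot].
  by rewrite lineval_nil.
case: ifP => [/and3P[hj hl _]|_]; last by rewrite lineval_nil.
rewrite lineval1 mul1r /mat2 mxE !inordK //; try lia.
by case: (nat_of_ord l) hl => [|[|]] //; case: (nat_of_ord j) hj => [|[|]].
Qed.

Lemma bracket_lin (i j l : 'I_7) :
  bracket x y z w A B C i j l = lineval param (bracketz i j l).
Proof. by rewrite /bracket /bracketz lineval_cat lineval_scalel !br_lin mulN1r. Qed.

Lemma dform_lin (s : seq 'I_7) :
  dform (bracket x y z w A B C) (hodge 3 (phi R)) s = lineval param (dpsiz (map val s)).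
Proof.
rewrite /dform /dpsiz lineval_flatten size_map big_iota_ord; apply: eq_bigr => a _.
rewrite lineval_flatten big_iota_ord big_mkcond; apply: eq_bigr => b _.
rewrite (fun_if (lineval param)) lineval_nil lineval_flatten big_iota_ord mulr_sumr.
case: ifP => // _; apply: eq_bigr => l _.
rewrite bracket_lin /= !(nth_map ord0) //.
case: bracketz => [|p L]; first by rewrite lineval_nil mul0r mulr0.
by rewrite lineval_scalel hodge_phi psi_int /= map_val_drop2 intrM intr_sign; ring.
Qed.

Lemma dform_eq0_lin :
  (forall s : 5.-tuple 'I_7, dform (bracket x y z w A B C) (hodge 3 (phi R)) s = 0)
  <-> {in map dpsiz (tuples 7 5), forall L, lineval param L = 0}.
Proof.
split=> [coclosed _ /mapP[sv /tuple_of_mem_tuples[s <-] ->] | dpsi0 s].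
  by rewrite -dform_lin coclosed.
rewrite dform_lin dpsi0 // map_f // mem_tuples size_map size_tuple eqxx /=.
by apply/allP => _ /mapP[i _ ->].
Qed.

End StructureConstants.

Definition f2z (p q a b : nat) : int :=
  ((a + 3 == p)%N && (b + 3 == q)%N)%:Z - ((a + 3 == q)%N && (b + 3 == p)%N)%:Z.
Definition om7z (a b : nat) : int := f2z 3 4 a b + f2z 5 6 a b.
Definition om1z (a b : nat) : int := f2z 3 5 a b - f2z 4 6 a b.
Definition om2z (a b : nat) : int := - f2z 3 6 a b - f2z 4 5 a b.

Definition trz (b : nat) : linform := [seq (slot b i i, 1) | i <- iota 0 4].

Definition trA1z : linform := [:: (0%N, 1); (3%N, 1)].

Definition thetaz (b : nat) (omz : nat -> nat -> int) (a c : nat) : linform :=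
  [seq (slot b k a, - omz k c) | k <- iota 0 4]
  ++ [seq (slot b k c, - omz a k) | k <- iota 0 4].

Definition theta_eqz (a c : nat) : linform :=
  thetaz 0 om7z a c ++ thetaz 1 om1z a c ++ thetaz 2 om2z a c
  ++ scalel (- om7z a c) trA1z.

Definition traceless_BC : seq linform := [:: trz 1; trz 2].

Definition paper_conditions : seq linform :=
  trz 0 :: [seq theta_eqz a c | a <- iota 0 4, c <- iota 0 4].

Section Conditions.
Context {R : realType} (x y z w : R) (A B C : 'M[R]_4).

Lemma f2_int p q (a b : 'I_4) : f2 R p q a b = (f2z p q a b)%:~R.
Proof. by rewrite /f2 /f2z intrB. Qed.

Lemma om7_int (a b : 'I_4) : om7 R a b = (om7z a b)%:~R.
Proof. by rewrite /om7 /om7z intrD !f2_int. Qed.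

Lemma om1_int (a b : 'I_4) : om1 R a b = (om1z a b)%:~R.
Proof. by rewrite /om1 /om1z intrB !f2_int. Qed.

Lemma om2_int (a b : 'I_4) : om2 R a b = (om2z a b)%:~R.
Proof. by rewrite /om2 /om2z intrB intrN !f2_int. Qed.

Local Notation P := (param x y z w A B C).

Lemma mxtrace_lin b : \tr (nth 0 [:: A; B; C] b) = lineval P (trz b).
Proof.
rewrite /lineval big_map big_iota_ord; apply: eq_bigr => i _.
by rewrite param_slot mul1r.
Qed.

Lemma mat2_trace_lin : \tr (mat2 x y z w) = lineval P trA1z.
Proof.
rewrite /lineval !big_cons big_nil /mxtrace !big_ord_recr big_ord0 /= !mxE /=.
by rewrite !mul1r addr0 add0r.
Qed.

Lemma theta_lin b {om : 'I_4 -> 'I_4 -> R} {omz : nat -> nat -> int}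
    (om_int : forall i j : 'I_4, om i j = (omz i j)%:~R) (a c : 'I_4) :
  theta (nth 0 [:: A; B; C] b) om a c = lineval P (thetaz b omz a c).
Proof.
rewrite /theta /thetaz lineval_cat /lineval !big_map !big_iota_ord -!sumrN.
by congr (_ + _); apply: eq_bigr => k _; rewrite param_slot om_int intrN mulNr mulrC.
Qed.

Lemma theta_eq_lin (a c : 'I_4) :
  theta A (om7 R) a c + theta B (om1 R) a c + theta C (om2 R) a c
    - \tr (mat2 x y z w) * om7 R a c = lineval P (theta_eqz a c).
Proof.
rewrite (theta_lin 0 om7_int) (theta_lin 1 om1_int) (theta_lin 2 om2_int).
by rewrite mat2_trace_lin om7_int /theta_eqz !lineval_cat lineval_scalel intrN; ring.
Qed.

Lemma traceless_BC_lin : \tr B = 0 -> \tr C = 0 ->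
  {in traceless_BC, forall L, lineval P L = 0}.
Proof.
by move=> trB0 trC0 L; rewrite !inE => /orP[]/eqP ->; rewrite -mxtrace_lin.
Qed.

Lemma paper_conditions_lin :
  (\tr A = 0 /\
   forall a c : 'I_4,
     theta A (om7 R) a c + theta B (om1 R) a c + theta C (om2 R) a c
     = \tr (mat2 x y z w) * om7 R a c)
  <-> {in paper_conditions, forall L, lineval P L = 0}.
Proof.
split=> [[trA0 theta0] L | conditions].
  rewrite inE => /orP[/eqP -> | /allpairsP[[a c] [ha hc ->]]].
    by rewrite -(mxtrace_lin 0).
  move: ha hc; rewrite !mem_iota => /andP[_ ha] /andP[_ hc].
  by rewrite -(theta_eq_lin (Ordinal ha) (Ordinal hc)) theta0 subrr.
split; first by rewrite (mxtrace_lin 0) conditions ?mem_head.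
move=> a c; apply/eqP; rewrite -subr_eq0 theta_eq_lin conditions //.
rewrite inE; apply/orP; right; apply/allpairsP.
by exists (val a, val c); rewrite !mem_iota !add0n !ltn_ord.
Qed.

End Conditions.

Definition nparams : nat := 52.

Definition increasing5 : seq (seq nat) := [seq sv <- tuples 7 5 | sorted ltn sv].

Lemma dpsi_up_to_sign :
  each_up_to_sign nparams (map dpsiz (tuples 7 5)) (traceless_BC ++ paper_conditions).
Proof. vm_cast_no_check (erefl true). Qed.

Lemma paper_conditions_up_to_sign :
  each_up_to_sign nparams paper_conditions (traceless_BC ++ map dpsiz increasing5).
Proof. vm_cast_no_check (erefl true). Qed.

Theorem corollary2p6 (R : realType) (x y z w : R) (A B C : 'M[R]_4)
  (htrB : \tr B = 0) (htrC : \tr C = 0)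
  (hAB : A *m B - B *m A = x *: B + y *: C)
  (hAC : A *m C - C *m A = z *: B + w *: C)
  (hBC : B *m C - C *m B = 0) :
  (forall s : 5.-tuple 'I_7,
      dform (bracket x y z w A B C) (hodge 3 (@phi R)) s = 0)
  <->
  (\tr A = 0 /\
   forall a b : 'I_4,
     theta A (@om7 R) a b + theta B (@om1 R) a b + theta C (@om2 R) a b
     = \tr (mat2 x y z w) * @om7 R a b).
Proof.
have BC0 := traceless_BC_lin x y z w A B C htrB htrC.
split=> [coclosed | conditions].
- apply/(paper_conditions_lin x y z w A B C).
  apply: (lineval_each_up_to_sign _ paper_conditions_up_to_sign) => L.
  rewrite mem_cat => /orP[/BC0 // | /mapP[sv hsv ->]].
  apply: (dform_eq0_lin x y z w A B C).1 coclosed _ (map_f _ _).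
  by move: hsv; rewrite mem_filter => /andP[].
- apply/(dform_eq0_lin x y z w A B C).
  apply: (lineval_each_up_to_sign _ dpsi_up_to_sign) => L.
  rewrite mem_cat => /orP[/BC0 // |].
  exact: (paper_conditions_lin x y z w A B C).1 conditions L.
Qed.
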